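(* If $q=2^k$ with $k>1$ then $f(X):=X^{q+2}+bX^q+cX$ does not permute $\mathbb{F}_{q^2}$ for any $b,c\in\mathbb{F}_{q^2}$ with $b\ne 0$. *)

From mathcomp Require Import all_boot all_algebra all_field.
Set Implicit Arguments. Unset Strict Implicit. Unset Printing Implicit Defensive.
Import GRing.Theory.
Local Open Scope ring_scope.

Definition fpoly (F : finFieldType) (q : nat) (b c : F) : F -> F :=
  fun x => x ^+ (q + 2) + b * x ^+ q + c * x.

From mathcomp Require Import all_boot all_algebra all_field.
From mathcomp Require Import ring zify.
Set Implicit Arguments. Unset Strict Implicit. Unset Printing Implicit Defensive.
Import GRing.Theory.
Local Open Scope ring_scope.

(* Let q = 2^k, so that F = F_(q^2) has characteristic 2, and let L y = y^q + y^2, an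
   additive map whose kernel lies in F_4.  If f is injective, then f (y/v + 1/v) and
   f (y/v) differ, so no element e + b v^2 with e = 1 + c v^(q+1) and v <> 0 lies in the
   image G of L; e only depends on the orbit of v under the norm-one elements m
   (m^(q+1) = 1).  Multiplying an element z outside G by the kernel of L gives a
   transversal of F/G.  So if b u^2 is in G (whence e is not) but z = b (l u)^2 is not,
   for some norm-one l, then e + w z is in G for some kernel element w <> 0; as
   w z = b (w^2 l u)^2 with w^2 l of norm one, this is impossible.  Thus the set of v
   with b v^2 in G is an additive group stable under the norm-one elements, which
   generate F as a ring: it is an ideal, and it is nonzero because G is.  Hence G = F,
   contradicting the nontrivial kernel of L. *)

Lemma card_imset_ker (V W : finZmodType) (L : V -> W) :
  {morph L : x y / x + y} ->
  #|V| = (#|L @: [set: V]| * #|[set x | L x == 0%R]|)%N.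
Proof.
move=> LD.
have LB x y : L (x - y) = L x - L y by apply: (addIr (L y)); rewrite -LD !subrK.
rewrite -cardsT -sum1_card (partition_big_imset L) -sum_nat_const.
apply: eq_bigr => _ /imsetP[y _ ->].
rewrite sum1dep_card -[RHS](card_imset _ (addrI y)); apply: eq_card => x.
rewrite !inE /=; apply/eqP/imsetP => [Lxy | [x' /[!inE] /eqP Lx' ->]].
  by exists (x - y); rewrite ?inE ?LB ?Lxy ?subrr // addrC subrK.
by rewrite LD Lx' addr0.
Qed.

Lemma cosets_cover (V : finZmodType) (G A : {set V}) :
  {in G &, forall x y, x - y \in G} ->
  {in A &, forall a a', a - a' \in G -> a = a'} ->
  (#|V| <= #|A| * #|G|)%N ->
  forall t, exists2 a, a \in A & t - a \in G.
Proof.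
move=> GB A_sep card_le t.
pose S := [set p.1 + p.2 | p in setX A G].
have S_inj : {in setX A G &, injective (fun p : V * V => p.1 + p.2)}.
  move=> [a1 g1] [a2 g2] /setXP[a1A g1G] /setXP[a2A g2G] /= e.
  have a12 : a1 = a2.
    apply: A_sep => //.
    by rewrite -(addrKA g1) e [a2 + g2]addrC [g1 + a2]addrC addrKA GB.
  by move: e; rewrite a12 => /addrI ->.
have : t \in S.
  have -> : S = setT by apply/eqP; rewrite eqEcard subsetT cardsT card_in_imset // cardsX.
  by rewrite inE.
by case/imsetP=> [[a g]] /setXP[aA gG] ->; exists a; rewrite //= addrC addKr.
Qed.

Lemma exists_expf_neq (F : finFieldType) n :
  (1 < n < #|F|)%N -> exists z : F, z ^+ n != z.
Proof.
case/andP=> n_gt1 n_lt; apply/existsP; apply: contraLR n_lt.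
rewrite negb_exists -leqNgt => /forallP /= fixed.
have size_p : size ('X^n - 'X : {poly F}) = n.+1.
  by rewrite size_polyDl ?size_polyXn // size_polyN size_polyX.
have p_neq0 : ('X^n - 'X : {poly F}) != 0 by rewrite -size_poly_eq0 size_p.
rewrite cardE -ltnS -size_p; apply: max_poly_roots p_neq0 _ (enum_uniq _).
by apply/allP => z _; rewrite rootE !hornerE subr_eq0 -[_ == _]negbK fixed.
Qed.

Section CharTwo.

Variable F : finFieldType.
Hypothesis pcharF : 2%N \in [pchar F].

Lemma exprD_pow2 n (x y : F) : (x + y) ^+ (2 ^ n) = x ^+ (2 ^ n) + y ^+ (2 ^ n).
Proof. by apply: exprDn_pchar; rewrite pnatX (pnatE _ (isT : prime 2)) pcharF. Qed.

Lemma sqrrD_pchar2 (x y : F) : (x + y) ^+ 2 = x ^+ 2 + y ^+ 2.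
Proof. exact: (exprD_pow2 1). Qed.

Lemma sqrf_surj (x : F) : exists y, y ^+ 2 = x.
Proof.
have sqr_inj : injective (fun y : F => y ^+ 2).
  move=> y z /(congr1 (+%R^~ (z ^+ 2))) /=; rewrite addrr_pchar2 // -sqrrD_pchar2.
  by move/eqP; rewrite expf_eq0 /= addr_eq0 oppr_pchar2 // => /eqP.
by have [sqrt _ sqrtK] := injF_bij sqr_inj; exists (sqrt x).
Qed.

Section QuadraticExtension.

Variable k : nat.
Let q := (2 ^ k)%N.
Hypothesis cardF : #|F| = (q ^ 2)%N.

Let expf_q2 (x : F) : x ^+ (q * q) = x.
Proof. by rewrite mulnn -cardF expf_card. Qed.

Let exprD_q (x y : F) : (x + y) ^+ q = x ^+ q + y ^+ q.
Proof. exact: exprD_pow2. Qed.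

Let q_gt1 : (1 < q)%N.
Proof. by have := card_finNzRing_gt1 F; rewrite cardF; case: (q) => [|[]]. Qed.

Let invf_expq2 (x : F) : x^-1 = x ^+ (q * q).-2.
Proof.
have qq_gt2 : (2 < q * q)%N by nia.
have [->|x_neq0] := eqVneq x 0.
  by rewrite invr0 expr0n; case: (q * q)%N qq_gt2 => [|[|[]]].
apply: (mulfI x_neq0); rewrite divff // -exprS; apply: (mulIf x_neq0).
by rewrite mul1r -exprSr (_ : (q * q).-2.+2 = q * q)%N ?expf_q2 //; lia.
Qed.

Lemma expf_predq_norm1 (y : F) : y != 0 -> (y ^+ q.-1) ^+ q.+1 = 1.
Proof.
move=> y_neq0; apply: (mulIf y_neq0); rewrite mul1r -exprM -exprSr.
by rewrite (_ : (q.-1 * q.+1).+1 = q * q)%N ?expf_q2 //; nia.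
Qed.

(* With r = y^(q-1) and s = (y+1)^(q-1) one has r y = y^q and s (y+1) = y^q + 1,
   hence (r + s) y = 1 + s. *)
Lemma expf_q_neq_ratio (y : F) : y ^+ q != y ->
  y = (1 + (y + 1) ^+ q.-1) / (y ^+ q.-1 + (y + 1) ^+ q.-1).
Proof.
move=> yq_neq; set r := y ^+ q.-1; set s := (y + 1) ^+ q.-1.
have y_neq0 : y != 0 by apply: contraNneq yq_neq => ->; rewrite expr0n gtn_eqF // ltnW.
have ry : r * y = y ^+ q by rewrite -exprSr prednK // ltnW.
have sy : s * (y + 1) = y ^+ q + 1 by rewrite -exprSr prednK ?exprD_q ?expr1n // ltnW.
have rsy : (r + s) * y = 1 + s.
  have sy' : s * y = y ^+ q + 1 - s by rewrite -sy mulrDr mulr1 addrK.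
  by rewrite mulrDl ry sy' !addrA addrr_pchar2 // add0r oppr_pchar2.
have rs_neq0 : r + s != 0.
  apply: contraNneq yq_neq => rs0; move: rsy; rewrite rs0 mul0r => /esym/eqP.
  rewrite addr_eq0 oppr_pchar2 // => /eqP s1; move/eqP: rs0.
  by rewrite -s1 addr_eq0 oppr_pchar2 // -ry => /eqP ->; rewrite mul1r.
by rewrite -rsy mulrAC mulfV ?mul1r.
Qed.

Lemma norm1_generated (E : pred F) :
  (forall l, l ^+ q.+1 = 1 -> E l) ->
  {in E &, forall x y, E (x + y)} -> {in E &, forall x y, E (x * y)} ->
  forall x, E x.
Proof.
move=> E_norm1 ED EM.
have E1 : E 1 by apply: E_norm1; rewrite expr1n.
have EX x n : E x -> E (x ^+ n).
  by move=> Ex; elim: n => [|n IHn]; rewrite ?expr0 // exprS EM.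
have E0 : E 0 by rewrite -(addrr_pchar2 pcharF 1) ED.
have E_predq y : E (y ^+ q.-1).
  have [->|y_neq0] := eqVneq y 0; last exact/E_norm1/expf_predq_norm1.
  by rewrite expr0n; case: (_ == _); [exact: E1 | exact: E0].
have E_nonfixed y : y ^+ q != y -> E y.
  move=> /expf_q_neq_ratio ->; rewrite invf_expq2.
  by apply: (EM); [apply: (ED) | apply/EX/(ED)]; rewrite unfold_in.
have [z zq_neq] : exists z : F, z ^+ q != z.
  by apply: exists_expf_neq; rewrite cardF q_gt1 -mulnn ltn_Pmull // ltnW.
move=> x; have [xq|] := eqVneq (x ^+ q) x; last exact: E_nonfixed.
rewrite -[x](addrK_pchar2 pcharF z); apply: ED; apply: E_nonfixed => //.
by rewrite exprD_q xq; apply: contraNneq zq_neq => /addrI ->.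
Qed.

Definition Lq (y : F) := y ^+ q + y ^+ 2.
Definition imLq : {set F} := Lq @: [set: F].
Definition kerLq : {set F} := [set y | Lq y == 0].

Lemma LqD : {morph Lq : x y / x + y}.
Proof. by move=> x y; rewrite /Lq exprD_q sqrrD_pchar2 addrACA. Qed.

Lemma imLqD : {in imLq &, forall x y, x + y \in imLq}.
Proof. by move=> _ _ /imsetP[x _ ->] /imsetP[y _ ->]; rewrite -LqD imset_f. Qed.

Lemma kerLqD : {in kerLq &, forall x y, x + y \in kerLq}.
Proof. by move=> x y; rewrite !inE LqD => /eqP-> /eqP->; rewrite addr0. Qed.

Lemma kerLqP w : reflect (w ^+ q = w ^+ 2) (w \in kerLq).
Proof. by rewrite inE /Lq addr_eq0 oppr_pchar2 //; apply: eqP. Qed.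

Lemma kerLq_expr4 w : w \in kerLq -> w ^+ 4 = w.
Proof. by move/kerLqP=> wq; rewrite -{2}[w]expf_q2 exprM wq exprAC wq -exprM. Qed.

Lemma kerLq_expr3 w : w \in kerLq -> w != 0 -> w ^+ 3 = 1.
Proof.
by move=> /kerLq_expr4 w4 w_neq0; apply: (mulIf w_neq0); rewrite mul1r -exprSr w4.
Qed.

Lemma kerLq_norm1 w : w \in kerLq -> w != 0 -> w ^+ q.+1 = 1.
Proof.
by move=> wK w_neq0; have /kerLqP wq := wK; rewrite exprSr wq -exprSr kerLq_expr3.
Qed.

Lemma mulr_imLq w g : w \in kerLq -> g \in imLq -> w * g \in imLq.
Proof.
move=> wK /imsetP[y _ ->]; apply/imsetP; exists (w ^+ 2 * y) => //.
have /kerLqP wq := wK.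
by rewrite /Lq !exprMn wq -exprD kerLq_expr4 // mulrDr.
Qed.

Lemma mulr_notin_imLq w g : w \in kerLq -> w != 0 -> g \notin imLq -> w * g \notin imLq.
Proof.
move=> wK w_neq0; apply: contra => wg; rewrite -[g]mul1r -(kerLq_expr3 wK w_neq0).
by rewrite !exprSr expr0 mul1r -!mulrA; apply: mulr_imLq => //; apply: mulr_imLq.
Qed.

Lemma card_imLq_kerLq : #|F| = (#|imLq| * #|kerLq|)%N.
Proof. exact: card_imset_ker LqD. Qed.

Lemma card_kerLq_ge2 : (2 <= #|kerLq|)%N.
Proof.
have := cards2 (0 : F) 1; rewrite eq_sym oner_neq0 => <-.
apply/subset_leq_card/subsetP => y.
rewrite !inE /Lq => /orP[] /eqP->; last by rewrite !expr1n addrr_pchar2.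
by rewrite !expr0n /= eqn0Ngt (ltnW q_gt1) addr0.
Qed.

Lemma exists_imLq_neq0 : (1 < k)%N -> exists2 g, g \in imLq & g != 0.
Proof.
move=> k_gt1; have q_ge4 : (2 ^ 2 <= q)%N by rewrite leq_exp2l.
have [z z4_neq] : exists z : F, z ^+ 4 != z by apply: exists_expf_neq; rewrite cardF; nia.
exists (Lq z); first exact: imset_f.
by apply: contra z4_neq => Lz0; rewrite kerLq_expr4 // inE.
Qed.

Lemma kerLq_transversal z t :
  z \notin imLq -> exists2 w, w \in kerLq & t + w * z \in imLq.
Proof.
move=> z_notin.
have z_neq0 : z != 0.
  apply: contraNneq z_notin => ->; apply/imsetP; exists 1 => //.
  by rewrite /Lq !expr1n addrr_pchar2.
have GB : {in imLq &, forall x y, x - y \in imLq}.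
  by move=> x y xG yG; rewrite oppr_pchar2 // imLqD.
pose A := [set w * z | w in kerLq].
have A_sep : {in A &, forall a a', a - a' \in imLq -> a = a'}.
  move=> _ _ /imsetP[w wK ->] /imsetP[w' w'K ->]; have [->//|ww'] := eqVneq w w'.
  have ww'_neq0 : w + w' != 0 by rewrite addr_eq0 oppr_pchar2.
  have := mulr_notin_imLq (kerLqD wK w'K) ww'_neq0 z_notin.
  by rewrite -mulrBl oppr_pchar2 // => /negPf->.
have card_le : (#|F| <= #|A| * #|imLq|)%N.
  by rewrite card_imset ?card_imLq_kerLq 1?mulnC //; apply: mulIf.
have [_ /imsetP[w wK ->] twG] := cosets_cover GB A_sep card_le t.
by exists w; rewrite // -(oppr_pchar2 pcharF (w * z)).
Qed.

Section InjectiveFpoly.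

Variables b c : F.
Hypothesis fpoly_inj : injective (fpoly q b c).

Lemma fpoly_inj_notin_imLq v : v != 0 -> 1 + b * v ^+ 2 + c * v ^+ q.+1 \notin imLq.
Proof.
move=> v_neq0; apply/imsetP => -[y _ Ly].
have vq_neq0 : v ^+ q != 0 by rewrite expf_neq0.
have : fpoly q b c (v^-1 * y + v^-1) - fpoly q b c (v^-1 * y) =
       v^-1 ^+ (q + 2) * (Lq y + (1 + b * v ^+ 2 + c * v ^+ q.+1)).
  rewrite /fpoly /Lq !exprD exprD_q !sqrrD_pchar2 !exprMn !exprVn [v ^+ q.+1]exprSr.
  by field; rewrite v_neq0 vq_neq0.
rewrite -Ly addrr_pchar2 // mulr0 => /eqP; rewrite subr_eq0 => /eqP/fpoly_inj/eqP.
by rewrite -subr_eq0 addrAC subrr add0r invr_eq0 (negbTE v_neq0).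
Qed.

Lemma imLq_mul_norm1 u l :
  l ^+ q.+1 = 1 -> b * u ^+ 2 \in imLq -> b * (l * u) ^+ 2 \in imLq.
Proof.
move=> l_norm1; have [->|u_neq0] := eqVneq u 0; first by rewrite mulr0.
move=> uG; set e := 1 + c * u ^+ q.+1.
have e_orbit m : m ^+ q.+1 = 1 -> e + b * (m * u) ^+ 2 \notin imLq.
  move=> m_norm1; have m_neq0 : m != 0.
    by apply: contra_eq_neq m_norm1 => ->; rewrite expr0n eq_sym oner_neq0.
  rewrite /e; have -> : u ^+ q.+1 = (m * u) ^+ q.+1 by rewrite exprMn m_norm1 mul1r.
  by rewrite addrAC fpoly_inj_notin_imLq ?mulf_neq0.
have e_notin : e \notin imLq.
  by apply: contra (e_orbit 1 (expr1n _ _)) => eG; rewrite mul1r imLqD.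
apply: contraT => lu_notin; have [w wK ewG] := kerLq_transversal e lu_notin.
have [w0|w_neq0] := eqVneq w 0.
  by move: ewG; rewrite w0 mul0r addr0 (negPf e_notin).
have : e + b * (w ^+ 2 * l * u) ^+ 2 \notin imLq.
  by apply: e_orbit; rewrite exprMn exprAC kerLq_norm1 // expr1n l_norm1 mulr1.
by rewrite -mulrA exprMn -exprM kerLq_expr4 // mulrCA ewG.
Qed.

Lemma imLq_full : (1 < k)%N -> b != 0 -> forall x, x \in imLq.
Proof.
move=> k_gt1 b_neq0.
pose E := [pred m | [forall v, (b * v ^+ 2 \in imLq) ==> (b * (m * v) ^+ 2 \in imLq)]].
have EP m v : m \in E -> b * v ^+ 2 \in imLq -> b * (m * v) ^+ 2 \in imLq.
  by move=> /forallP/(_ v)/implyP.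
have E_all : forall m, E m.
  apply: norm1_generated => [l l_norm1 | m m' Em Em' | m m' Em Em'];
    apply/forallP => v; apply/implyP => vG.
  - exact: imLq_mul_norm1.
  - by rewrite mulrDl sqrrD_pchar2 mulrDr imLqD ?EP.
  - by rewrite -mulrA !EP.
have [g gG g_neq0] := exists_imLq_neq0 k_gt1.
have [v0 v0_sqr] := sqrf_surj (g / b).
have v0G : b * v0 ^+ 2 \in imLq by rewrite v0_sqr mulrC divfK.
have v0_neq0 : v0 != 0.
  apply: contraNneq g_neq0 => v00; move: v0_sqr; rewrite v00 expr0n /= => /esym/eqP.
  by rewrite mulf_eq0 invr_eq0 (negPf b_neq0) orbF => ->.
move=> x; have [y y_sqr] := sqrf_surj (x / b).
rewrite -(divfK b_neq0 x) mulrC -y_sqr -(divfK v0_neq0 y).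
by apply: EP; first exact: E_all.
Qed.

End InjectiveFpoly.

End QuadraticExtension.
End CharTwo.

Theorem lemma2p4 (k : nat) (F : finFieldType) (b c : F) :
  (1 < k)%N -> #|F| = ((2 ^ k) ^ 2)%N -> b != 0 ->
  ~ bijective (fpoly (2 ^ k) b c).
Proof.
move=> k_gt1 cardF b_neq0 /bij_inj f_inj.
have pcharF : 2%N \in [pchar F].
  by apply: (card_finPcharP (n := (k * 2)%N)); rewrite // cardF expnM.
have imLqT : imLq F k = [set: F].
  by apply/setP => x; rewrite inE (imLq_full pcharF cardF f_inj k_gt1 b_neq0).
have := card_imLq_kerLq pcharF k; rewrite imLqT cardsT.
have := card_kerLq_ge2 pcharF cardF; have := card_finNzRing_gt1 F.
set n := #|F|; set m := #|kerLq F k|; nia.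
Qed.
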